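(* Let $\underline q>0$, let $\theta^*\in\Theta(\underline q)$, and let the fixed initial distribution $\mu$ satisfy $\mu_i\ge\underline q$ for all $i$. If (A1) holds, then for every $\epsilon\in(0,1)$ for which $\Theta_\epsilon$ is defined in (A1), there exists $N\in\mathbb N$ such that for all $n\ge N$ and all $\theta\in\Theta_\epsilon$, $$\frac1n\,KL\big(P_n^{\theta^*},P_n^{\theta,\mu}\big)\le\frac{3}{\underline q}\,\epsilon,$$ where $P_n^{\theta,\mu}=p_n^{\theta,\mu}\lambda^{\otimes n}$ is the law of $Y_{1:n}$ under $\mathbb P^{\theta,\mu}$ and $KL(P_1,P_2)=\int p_1\log(p_1/p_2)$ if $P_1\ll P_2$, $+\infty$ otherwise.
   Context: Fix integers $k\ge1$, $d\ge1$. $\lambda$ is a $\sigma$-finite reference measure on $\mathbb R^d$ (Borel $\sigma$-field) and $\mathcal F$ is the set of probability densities with respect to $\lambda$. $\Delta_k=\{x\in[0,\infty)^k:\sum_i x_i=1\}$; a transition matrix is an element $Q\in\Delta_k^k$ (each row lies in $\Delta_k$). For $\underline q\ge0$, $\Delta^k(\underline q)=\{Q\in\Delta_k^k:\min_{i,j}Q_{i,j}\ge\underline q\}$, $\Theta=\Delta_k^k\times\mathcal F^k$ and $\Theta(\underline q)=\Delta^k(\underline q)\times\mathcal F^k$. For $\underline q>0$ and $Q\in\Delta^k(\underline q)$, $\mu^Q$ denotes the unique stationary distribution of $Q$. For $\theta=(Q,f)$, $f=(f_1,\dots,f_k)\in\mathcal F^k$, and an initial distribution $\nu\in\Delta_k$,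 $\mathbb P^{\theta,\nu}$ is the law of the hidden Markov model $(X_t,Y_t)_{t\ge1}$: $(X_t)$ is a Markov chain on $\{1,\dots,k\}$ with initial law $\nu$ and transition matrix $Q$, and conditionally on $(X_t)_t$ the variables $Y_t\in\mathbb R^d$ are independent, $Y_t$ having density $f_{X_t}$ with respect to $\lambda$. $\mathbb P^\theta:=\mathbb P^{\theta,\mu^Q}$. The density of $Y_{1:l}$ with respect to $\lambda^{\otimes l}$ is $p_l^{\theta,\nu}(y_{1:l})=\sum_{x_1,\dots,x_l=1}^k\nu_{x_1}Q_{x_1,x_2}\cdots Q_{x_{l-1},x_l}f_{x_1}(y_1)\cdots f_{x_l}(y_l)$; $p_l^\theta:=p_l^{\theta,\mu^Q}$, $P_l^\theta:=p_l^\theta\lambda^{\otimes l}$. The prior is $\pi=\pi_Q\otimes\pi_f$ on $\Theta$ with a fixed initial distribution $\mu\in\Delta_k$. $\theta^*=(Q^*,f^* )$ is the true parameter. $\|M\|=\max_{i,j}|M_{i,j}|$. Assumption (A1) (for given $\underline q>0$): there is $\epsilon_0>0$ such that for every $\epsilon\in(0,\epsilon_0)$ there is a set $\Theta_\epsilon\subset\Theta(\underline q)$ with $\pi(\Theta_\epsilon)>0$ such that every $\theta=(Q,f)\in\Theta_\epsilon$ satisfies: (A1a) $\|Q-Q^*\|<\epsilon$; (A1b) $\max_{1\le i\le k}\int f_i^*(y)\max_{1\le j\le k}\log\big(f_j^*(y)/f_j(y)\big)\lambda(dy)<\epsilon$; (A1c) for all $y$ with $\sum_i f_i^*(y)>0$,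 $\sum_j f_j(y)>0$; (A1d) $\sup_{y:\sum_i f_i^*(y)>0}\max_j f_j(y)<\infty$; (A1e) $\sum_{i=1}^k\int f_i^*(y)\,\big|\log\big(\sum_{j=1}^k f_j(y)\big)\big|\lambda(dy)<\infty$. *)

From HB Require Import structures.
From mathcomp Require Import all_boot all_order all_algebra.
From mathcomp Require Import all_classical all_reals all_analysis.
Import Order.TTheory GRing.Theory Num.Theory.

Set Implicit Arguments.
Unset Strict Implicit.
Unset Printing Implicit Defensive.

Local Open Scope classical_set_scope.
Local Open Scope ring_scope.

(* Carrier types of the two factors of the parameter space
   Theta = Delta_k^k x F^k; they are given a (trivial) pointed structure
   so that they can carry an arbitrary sigma-algebra (g_sigma_algebraType). *)
Definition trans_mat (k : nat) (R : realType) : Type := 'M[R]_k.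
HB.instance Definition _ k (R : realType) := Choice.on (trans_mat k R).
HB.instance Definition _ k (R : realType) :=
  isPointed.Build (trans_mat k R) (0 : 'M[R]_k).
Definition emis (k : nat) (T : Type) (R : realType) : Type := 'I_k -> T -> R.
HB.instance Definition _ k T (R : realType) := Choice.on (emis k T R).
HB.instance Definition _ k T (R : realType) :=
  isPointed.Build (emis k T R) (fun _ _ => 0).

Section hmm_defs.
Variables (R : realType) (k : nat).

Definition in_simplex (v : 'I_k -> R) : Prop :=
  (forall i, 0 <= v i) /\ \sum_i v i = 1.

Definition transition_matrix (Q : 'M[R]_k) : Prop :=
  forall i, in_simplex (fun j => Q i j).

Definition in_Delta_lb (qlow : R) (Q : 'M[R]_k) : Prop :=
  transition_matrix Q /\ forall i j, qlow <= Q i j.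

Definition is_stationary (Q : 'M[R]_k) (m : 'I_k -> R) : Prop :=
  in_simplex m /\ forall j, \sum_i m i * Q i j = m j.

Definition init_weight (nu : 'I_k -> R) (x : seq 'I_k) : R :=
  if x is x0 :: _ then nu x0 else 1.

Fixpoint chain_weight (Q : 'M[R]_k) (x : seq 'I_k) : R :=
  match x with
  | x1 :: ((x2 :: _) as x') => Q x1 x2 * chain_weight Q x'
  | _ => 1
  end.

Definition hmm_density (T : Type) (nu : 'I_k -> R) (Q : 'M[R]_k)
    (f : 'I_k -> T -> R) (l : nat) (y : l.-tuple T) : R :=
  \sum_(x : l.-tuple 'I_k)
     init_weight nu x * chain_weight Q x * \prod_(t < l) f (tnth x t) (tnth y t).

End hmm_defs.
Arguments hmm_density {R k T} nu Q f l y.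

Section measure_defs.
Context {dT : measure_display} {T : measurableType dT} {R : realType}.
Local Open Scope ereal_scope.

Definition is_density (lam : set T -> \bar R) (f : T -> R) : Prop :=
  measurable_fun setT f /\ (forall y, (0 <= f y)%R) /\
  \int[lam]_y (f y)%:E = 1.

Definition dens_meas (mu : set T -> \bar R) (p : T -> R) (A : set T) : \bar R :=
  \int[mu]_(y in A) (p y)%:E.

Definition abs_cont (mu : set T -> \bar R) (p1 p2 : T -> R) : Prop :=
  forall A, measurable A -> dens_meas mu p2 A = 0 -> dens_meas mu p1 A = 0.

Definition KL (mu : set T -> \bar R) (p1 p2 : T -> R) : \bar R :=
  if `[< abs_cont mu p1 p2 >] then \int[mu]_y ((p1 y * ln (p1 y / p2 y))%R)%:E
  else +oo.

End measure_defs.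

(* n-fold product measure lam^{(x)n} on n.-tuple T (tuple sigma-algebra),
   built by iterated integration of sections:
   lam^{(x)0} = Dirac at the empty tuple,
   lam^{(x)(n+1)}(A) = int lam(dy) lam^{(x)n}([set t | (y :: t) \in A]). *)
Fixpoint prod_meas {dT : measure_display} {T : measurableType dT} {R : realType}
    (lam : {measure set T -> \bar R}) (n : nat) : set (n.-tuple T) -> \bar R :=
  match n return set (n.-tuple T) -> \bar R with
  | 0 => fun A => ((\1_A : _ -> R) [tuple])%:E
  | m.+1 => fun A =>
      (\int[lam]_y prod_meas lam [set t : m.-tuple T | A (cons_tuple y t)])%E
  end.

Arguments prod_meas {dT T R} lam n _.

Definition log_ratio {R : realType} (a b : R) : \bar R :=
  (if a == 0%R then -oo else if b == 0%R then +oo else (ln (a / b))%:E)%E.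

Section A1.
Context {dT : measure_display} {T : measurableType dT} {R : realType} {k : nat}.
Variables (lam : {measure set T -> \bar R}) (Qs : 'M[R]_k) (fs : 'I_k -> T -> R).
Local Open Scope ereal_scope.

Definition in_Theta_lb (qlow : R) (Q : 'M[R]_k) (f : 'I_k -> T -> R) : Prop :=
  in_Delta_lb qlow Q /\ forall i, is_density lam (f i).

Definition A1a (eps : R) (Q : 'M[R]_k) : Prop :=
  forall i j, (`|Q i j - Qs i j| < eps)%R.

Definition A1b (eps : R) (f : 'I_k -> T -> R) : Prop :=
  forall i, \int[lam]_y ((fs i y)%:E *
                \big[Order.max/-oo]_(j < k) log_ratio (fs j y) (f j y)) < eps%:E.

Definition A1c (f : 'I_k -> T -> R) : Prop :=
  forall y, (0 < \sum_i fs i y)%R -> (0 < \sum_j f j y)%R.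

Definition A1d (f : 'I_k -> T -> R) : Prop :=
  exists M : R, forall y, (0 < \sum_i fs i y)%R -> forall j, (f j y <= M)%R.

Definition A1e (f : 'I_k -> T -> R) : Prop :=
  \sum_(i < k) \int[lam]_y ((fs i y * `|ln (\sum_j f j y)|)%R)%:E < +oo.

End A1.

(* Let p* and p be the densities of Y_{1:n} under theta* (stationary start) and
   under (theta, mu).  Both are mixtures over hidden paths x of a path weight
   times prod_t f_{x_t}(y_t).  The lower bounds mu_i, Q_ij >= q and (A1a) give
   w*(x) <= K w(x) with K = (1 + eps/q)^(n-1) / q, and with
   M(y) = max_j log (f*_j(y) / f_j(y)) we have f*_j <= e^M f_j, so
   log (p* / p)(y) <= log K + sum_t M(y_t).  The t-th marginal of p* is a
   mixture of the f*_i, hence (A1b) bounds each term of the integrated sum by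
   eps, and KL <= log K + n eps <= 1/q + (n-1) eps/q + n eps.  Dividing by n
   gives 3 eps / q once 1/n < eps.  (A1c) makes P* absolutely continuous. *)

From HB Require Import structures.
From mathcomp Require Import all_boot all_order all_algebra.
From mathcomp Require Import all_classical all_reals all_analysis.
From mathcomp Require Import measurable_realfun ring lra.
Import Order.TTheory GRing.Theory Num.Theory.
Import numFieldNormedType.Exports.

Set Implicit Arguments.
Unset Strict Implicit.
Unset Printing Implicit Defensive.
Local Open Scope classical_set_scope.
Local Open Scope ring_scope.

Section sum_tuple.
Context {I : finType} {V : nmodType}.

Lemma sum_tuple0 (F : 0.-tuple I -> V) : \sum_(x : 0.-tuple I) F x = F [tuple].
Proof. by rewrite (big_pred1 [tuple]) // => x /=; apply/esym/eqP; exact: tuple0. Qed.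

Lemma sum_tupleS n (F : n.+1.-tuple I -> V) :
  \sum_(x : n.+1.-tuple I) F x = \sum_(a : I) \sum_(x : n.-tuple I) F (cons_tuple a x).
Proof.
rewrite pair_big /= (reindex (fun p : I * n.-tuple I => cons_tuple p.1 p.2)) //=.
apply: onW_bij; exists (fun x => (thead x, behead_tuple x)).
  by move=> [a x] /=; congr pair; apply: val_inj.
by move=> x; apply: val_inj => /=; rewrite [in RHS](tuple_eta x).
Qed.

End sum_tuple.

Section hmm_weights.
Context {R : realType} {k : nat}.
Implicit Types (nu : 'I_k -> R) (Q : 'M[R]_k).

Lemma simplex_le1 (v : 'I_k -> R) i : in_simplex v -> v i <= 1.
Proof. by move=> [v0 <-]; rewrite (bigD1 i) //= lerDl sumr_ge0. Qed.

Lemma chain_weight_ge0 Q : (forall i j, 0 <= Q i j) -> forall s, 0 <= chain_weight Q s.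
Proof. by move=> Q0; elim=> [|a [|b s] IH] //=; rewrite mulr_ge0. Qed.

Lemma chain_weight_gt0 Q : (forall i j, 0 < Q i j) -> forall s, 0 < chain_weight Q s.
Proof. by move=> Q0; elim=> [|a [|b s] IH] //=; rewrite mulr_gt0. Qed.

Lemma chain_weight_le Q1 Q2 (c : R) :
  (forall i j, 0 <= Q1 i j) -> (forall i j, 0 <= Q2 i j) ->
  (forall i j, Q1 i j <= c * Q2 i j) ->
  forall s, chain_weight Q1 s <= c ^+ (size s).-1 * chain_weight Q2 s.
Proof.
move=> Q1_0 Q2_0 Q12; elim=> [|a [|b s] IH] /=; rewrite ?mul1r //.
rewrite exprS mulrACA; apply: ler_pM => //; exact: (chain_weight_ge0 Q1_0 (b :: s)).
Qed.

Lemma sum_chain_weight Q : transition_matrix Q ->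
  forall n a, \sum_(x : n.-tuple 'I_k) chain_weight Q (a :: x) = 1.
Proof.
move=> HQ; elim=> [|n IH] a; first by rewrite sum_tuple0.
rewrite sum_tupleS -[RHS](proj2 (HQ a)); apply: eq_bigr => b _.
by rewrite -[RHS]mulr1 -(IH b) mulr_sumr.
Qed.

Definition path_weight nu Q n (x : n.-tuple 'I_k) : R :=
  init_weight nu x * chain_weight Q x.

Lemma path_weight_ge0 nu Q n (x : n.-tuple 'I_k) :
  (forall i, 0 <= nu i) -> (forall i j, 0 <= Q i j) -> 0 <= path_weight nu Q x.
Proof.
move=> nu0 Q0; rewrite mulr_ge0 ?chain_weight_ge0 //.
by case: x => -[|a s] _ /=.
Qed.

Lemma path_weight_gt0 nu Q n (x : n.-tuple 'I_k) :
  (forall i, 0 < nu i) -> (forall i j, 0 < Q i j) -> 0 < path_weight nu Q x.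
Proof.
move=> nu0 Q0; rewrite mulr_gt0 ?chain_weight_gt0 //.
by case: x => -[|a s] _ /=.
Qed.

Lemma path_weight_le nu1 nu2 Q1 Q2 (a c : R) n (x : n.+1.-tuple 'I_k) :
  (forall i, 0 <= nu1 i) -> (forall i, nu1 i <= a * nu2 i) ->
  (forall i j, 0 <= Q1 i j) -> (forall i j, 0 <= Q2 i j) ->
  (forall i j, Q1 i j <= c * Q2 i j) ->
  path_weight nu1 Q1 x <= a * c ^+ n * path_weight nu2 Q2 x.
Proof.
move=> nu1_0 nu12 Q1_0 Q2_0 Q12; rewrite /path_weight mulrACA.
have := chain_weight_le Q1_0 Q2_0 Q12 x; rewrite size_tuple /= => chain_le.
have init_ge0 : 0 <= init_weight nu1 x by case/tupleP: x {chain_le} => b x /=.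
have init_le : init_weight nu1 x <= a * init_weight nu2 x.
  by case/tupleP: x {chain_le init_ge0} => b x /=.
exact: ler_pM init_ge0 (chain_weight_ge0 Q1_0 x) init_le chain_le.
Qed.

Lemma sum_path_weight nu Q : in_simplex nu -> transition_matrix Q ->
  forall n, \sum_(x : n.-tuple 'I_k) path_weight nu Q x = 1.
Proof.
move=> [_ nu1] HQ [|n]; first by rewrite sum_tuple0 /path_weight /= mulr1.
rewrite sum_tupleS -[RHS]nu1; apply: eq_bigr => a _ /=.
by rewrite /path_weight /= -mulr_sumr (sum_chain_weight HQ) mulr1.
Qed.

Context {T : Type}.
Implicit Types g : 'I_k -> T -> R.

Definition emis_prod g n (x : n.-tuple 'I_k) (y : n.-tuple T) : R :=
  \prod_(t < n) g (tnth x t) (tnth y t).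

Lemma emis_prod_cons g n x0 (x : n.-tuple 'I_k) y0 (y : n.-tuple T) :
  emis_prod g (cons_tuple x0 x) (cons_tuple y0 y) = g x0 y0 * emis_prod g x y.
Proof.
rewrite /emis_prod big_ord_recl /=; congr (_ * _).
by apply: eq_bigr => i _; rewrite !tnthS.
Qed.

Lemma emis_prod_ge0 g n (x : n.-tuple 'I_k) y :
  (forall i z, 0 <= g i z) -> 0 <= emis_prod g x y.
Proof. by move=> g0; apply: prodr_ge0 => t _. Qed.

Lemma hmm_densityE nu Q g n (y : n.-tuple T) :
  hmm_density nu Q g n y = \sum_(x : n.-tuple 'I_k) path_weight nu Q x * emis_prod g x y.
Proof. by []. Qed.

Section hmm_density_positivity.
Context {nu : 'I_k -> R} {Q : 'M[R]_k} {g : 'I_k -> T -> R}.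
Hypothesis g0 : forall i z, 0 <= g i z.

Lemma hmm_density_ge0 n (y : n.-tuple T) :
  (forall i, 0 <= nu i) -> (forall i j, 0 <= Q i j) -> 0 <= hmm_density nu Q g n y.
Proof.
move=> nu0 Q0; apply: sumr_ge0 => x _.
by rewrite mulr_ge0 ?path_weight_ge0 ?emis_prod_ge0.
Qed.

Lemma hmm_density_gt0_emis n (y : n.-tuple T) :
  0 < hmm_density nu Q g n y -> forall t, 0 < \sum_i g i (tnth y t).
Proof.
move=> p_gt0 t; rewrite lt_def sumr_ge0 ?andbT // psumr_eq0 //.
apply: contraTN p_gt0 => /allP gy0; rewrite -leNgt hmm_densityE.
rewrite big1 // => x _; rewrite /emis_prod (bigD1 t) //=.
by rewrite (eqP (gy0 _ (mem_index_enum _))) mul0r !mulr0.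
Qed.

Lemma hmm_density_gt0 n (y : n.-tuple T) :
  (forall i, 0 < nu i) -> (forall i j, 0 < Q i j) ->
  (forall t, 0 < \sum_i g i (tnth y t)) -> 0 < hmm_density nu Q g n y.
Proof.
move=> nu0 Q0 gy0.
have /all_sig[x0 x0P] t : {i | 0 < g i (tnth y t)}.
  apply: sigW; apply/existsP; apply: contraTT (gy0 t).
  by rewrite negb_exists -leNgt => /forallP gy; apply: sumr_le0 => i _; rewrite leNgt gy.
rewrite hmm_densityE (bigD1 [tuple x0 t | t < n]) //=.
apply: ltr_wpDr.
  apply: sumr_ge0 => x _; rewrite mulr_ge0 ?emis_prod_ge0 ?path_weight_ge0 //.
  - by move=> i; exact: ltW.
  - by move=> i j; exact: ltW.
rewrite mulr_gt0 ?path_weight_gt0 //.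
by apply: prodr_gt0 => t _; rewrite tnth_mktuple.
Qed.

End hmm_density_positivity.

Lemma hmm_density_le nu1 nu2 Q1 Q2 g1 g2 n (y : n.-tuple T) (K : R) (c : 'I_n -> R) :
  (forall i z, 0 <= g1 i z) ->
  (forall x : n.-tuple 'I_k, 0 <= path_weight nu1 Q1 x) ->
  (forall x : n.-tuple 'I_k, path_weight nu1 Q1 x <= K * path_weight nu2 Q2 x) ->
  (forall t j, g1 j (tnth y t) <= c t * g2 j (tnth y t)) ->
  hmm_density nu1 Q1 g1 n y <= K * \prod_t c t * hmm_density nu2 Q2 g2 n y.
Proof.
move=> g1_0 w1_0 w12 gy12; rewrite !hmm_densityE mulr_sumr; apply: ler_sum => x _.
rewrite mulrACA; apply: ler_pM => //; first exact: emis_prod_ge0.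
rewrite /emis_prod -big_split /=; apply: ler_prod => t _.
by rewrite g1_0 gy12.
Qed.

End hmm_weights.

Section tuple_product_measure.
Context {dT : measure_display} {T : measurableType dT} {R : realType}.
Variable lam : {sigma_finite_measure set T -> \bar R}.
Local Open Scope ereal_scope.

Definition tcons n (z : T * n.-tuple T) : n.+1.-tuple T := cons_tuple z.1 z.2.

Definition tuncons n (t : n.+1.-tuple T) : T * n.-tuple T :=
  (thead t, [tuple of behead t]).

Lemma measurable_tcons n : measurable_fun setT (@tcons n).
Proof. exact: (measurable_cons measurable_fst measurable_snd). Qed.

Lemma measurable_tuncons n : measurable_fun setT (@tuncons n).
Proof.
apply: measurable_fun_pair; last exact: measurable_behead.
exact: measurable_tnth.
Qed.

Lemma tunconsK n : cancel (@tcons n) (@tuncons n).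
Proof. by move=> [y t]; congr pair; apply: val_inj. Qed.

(* [prod_meas lam n] is a bare set function; identifying it with an iterated
   pushforward of product measures gives it the sigma-finite measure structure
   that the integration lemmas require. *)
Section cons_measure.
Variables (n : nat) (P : {sigma_finite_measure set (n.-tuple T) -> \bar R}).

Definition cons_measure : set (n.+1.-tuple T) -> \bar R :=
  pushforward (lam \x P) (@tcons n).

Let cons_measure0 : cons_measure set0 = 0.
Proof. by rewrite /cons_measure /pushforward preimage_set0 measure0. Qed.

Let cons_measure_ge0 A : 0 <= cons_measure A.
Proof. by rewrite /cons_measure /pushforward; exact: measure_ge0. Qed.

Let cons_measure_sigma_additive : semi_sigma_additive cons_measure.
Proof.
have mtcons := @measurable_tcons n.
move=> F mF tF mUF; rewrite /cons_measure /pushforward preimage_bigcup.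
apply: measure_semi_sigma_additive.
- by move=> i; rewrite -[X in measurable X]setTI; exact: mtcons.
- apply/trivIsetP => /= i j _ _ ij; rewrite -preimage_setI.
  by move/trivIsetP : tF => /(_ _ _ _ _ ij) ->//; rewrite preimage_set0.
- by rewrite -preimage_bigcup -[X in measurable X]setTI; exact: mtcons.
Qed.

HB.instance Definition _ := isMeasure.Build _ _ _ cons_measure
  cons_measure0 cons_measure_ge0 cons_measure_sigma_additive.

Let prod_sigma_finite : sigma_finite setT (lam \x P).
Proof.
have /sigma_finiteP[F [TF ndF Foo]] := sigma_finiteT lam.
have /sigma_finiteP[G [TG ndG Goo]] := sigma_finiteT P.
exists (fun i => F i `*` G i).
  rewrite -setXTT TF TG predeqE => -[x y]; split.
    move=> [/= [i _ Fix] [j _ Gjy]]; exists (maxn i j) => //; split.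
    - by move: x Fix; exact/subsetPset/ndF/leq_maxl.
    - by move: y Gjy; exact/subsetPset/ndG/leq_maxr.
  by move=> [i _ []/= ? ?]; split; exists i.
move=> i; have [? ?] := Foo i; have [? ?] := Goo i.
split; first exact: measurableX.
by rewrite product_measure1E// lte_mul_pinfty// ge0_fin_numE.
Qed.

Let cons_measure_sigma_finite : sigma_finite setT cons_measure.
Proof.
have [F FT Ffin] := prod_sigma_finite.
exists (fun i => @tuncons n @^-1` F i).
  apply/seteqP; split => // t _.
  have : setT (tuncons t) by [].
  by rewrite FT => -[i _ Fi]; exists i.
move=> i; have [mF Flt] := Ffin i; split.
  by rewrite -[X in measurable X]setTI; exact: measurable_tuncons.
rewrite /cons_measure /pushforward (_ : _ @^-1` _ = F i) //.
by apply/seteqP; split => z /=; rewrite tunconsK.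
Qed.

HB.instance Definition _ := Measure_isSigmaFinite.Build _ _ _ cons_measure
  cons_measure_sigma_finite.

End cons_measure.

Lemma prod_meas0 : prod_meas lam 0 = \d_[tuple].
Proof. by apply/funext => A /=; rewrite diracE. Qed.

Lemma prod_measS n (P : {sigma_finite_measure set (n.-tuple T) -> \bar R}) :
  prod_meas lam n = P -> prod_meas lam n.+1 = cons_measure P.
Proof.
move=> PE; apply/funext => A /=.
rewrite /cons_measure /pushforward /product_measure1 PE.
apply: eq_integral => y _ /=; congr (P _).
by apply/seteqP; split => t /=; rewrite /xsection /= inE.
Qed.

Lemma prod_meas_sigma_finite n :
  exists P : {sigma_finite_measure set (n.-tuple T) -> \bar R},
    prod_meas lam n = P.
Proof.
elim: n => [|n [P /prod_measS PE]]; last by exists (cons_measure P).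
by exists (\d_[tuple] : {sigma_finite_measure set (0.-tuple T) -> \bar R});
  rewrite prod_meas0.
Qed.

Lemma integral_prod_measS n (g : n.+1.-tuple T -> \bar R) :
  measurable_fun setT g -> (forall t, 0 <= g t) ->
  \int[prod_meas lam n.+1]_t g t =
  \int[lam]_z \int[prod_meas lam n]_t g (cons_tuple z t).
Proof.
move=> mg g0; have [P PE] := prod_meas_sigma_finite n.
rewrite (prod_measS PE) PE /cons_measure.
rewrite ge0_integral_pushforward //; last exact: measurable_tcons.
rewrite preimage_setT (@fubini_tonelli1 _ _ _ _ _ lam P (g \o @tcons n)) //.
- exact: measurableT_comp (@measurable_tcons n).
- by move=> ?; exact: g0.
Qed.

Variable k : nat.

Lemma measurable_emis_prod (g : 'I_k -> T -> R) n (x : n.-tuple 'I_k) :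
  (forall i, measurable_fun setT (g i)) -> measurable_fun setT (emis_prod g x).
Proof.
move=> mg; apply: measurable_prod => t _.
exact: measurableT_comp (mg _) (measurable_tnth t).
Qed.

Section densities.
Variable g : 'I_k -> T -> R.
Hypothesis gd : forall i, is_density lam (g i).

Let mg i : measurable_fun setT (g i). Proof. by case: (gd i). Qed.
Let g0 i z : (0 <= g i z)%R. Proof. by case: (gd i) => _ []. Qed.

Let measurable_EFin_emis_prod n (x : n.-tuple 'I_k) :
  measurable_fun setT (fun y => (emis_prod g x y)%:E).
Proof. by apply/measurable_EFinP; exact: measurable_emis_prod. Qed.

Lemma integral_emis_prod n (x : n.-tuple 'I_k) :
  \int[prod_meas lam n]_y (emis_prod g x y)%:E = 1.
Proof.
elim: n x => [|n IH] x.
  rewrite prod_meas0 integral_dirac //; last exact: measurable_EFin_emis_prod.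
  by rewrite diracT mul1e /emis_prod big_ord0.
case/tupleP: x => x0 x.
rewrite integral_prod_measS //; last by move=> y; rewrite lee_fin emis_prod_ge0.
have [P PE] := prod_meas_sigma_finite n.
rewrite PE in IH *; rewrite -[RHS](proj2 (proj2 (gd x0))).
apply: eq_integral => z _.
under eq_integral do rewrite emis_prod_cons EFinM.
rewrite ge0_integralZl ?IH ?mule1 ?lee_fin //.
  exact: measurable_EFin_emis_prod.
by move=> y _; rewrite lee_fin emis_prod_ge0.
Qed.

Lemma integral_emis_prod_tnth (h : T -> \bar R) :
  measurable_fun setT h -> (forall z, 0 <= h z) ->
  forall n (x : n.-tuple 'I_k) (t : 'I_n),
  \int[prod_meas lam n]_y ((emis_prod g x y)%:E * h (tnth y t)) =
  \int[lam]_z ((g (tnth x t) z)%:E * h z).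
Proof.
move=> mh h0; elim=> [|n IH] x t; first by case: t.
have mFh n' (x' : n'.-tuple 'I_k) t' :
    measurable_fun setT (fun y => (emis_prod g x' y)%:E * h (tnth y t')).
  apply: emeasurable_funM; first exact: measurable_EFin_emis_prod.
  exact: measurableT_comp mh (measurable_tnth t').
have Fh0 n' (x' : n'.-tuple 'I_k) y t' : 0 <= (emis_prod g x' y)%:E * h (tnth y t').
  by rewrite mule_ge0 // lee_fin emis_prod_ge0.
case/tupleP: x => x0 x.
rewrite integral_prod_measS //.
have [P PE] := prod_meas_sigma_finite n.
have I1 := integral_emis_prod x; rewrite PE in IH I1 *.
case: (unliftP ord0 t) => [t'|] ->.
  transitivity (\int[lam]_z ((g x0 z)%:E * \int[lam]_z ((g (tnth x t') z)%:E * h z))).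
    apply: eq_integral => z _.
    under eq_integral do rewrite emis_prod_cons EFinM tnthS -muleA.
    by rewrite ge0_integralZl ?IH ?lee_fin //; exact: mFh.
  rewrite ge0_integralZr //.
  - by rewrite (proj2 (proj2 (gd x0))) mul1e tnthS.
  - exact/measurable_EFinP.
  - by move=> z _; rewrite lee_fin.
  - by apply: integral_ge0 => z _; rewrite mule_ge0 ?lee_fin.
apply: eq_integral => z _.
transitivity (\int[P]_s (((g x0 z)%:E * h z) * (emis_prod g x s)%:E)).
  by apply: eq_integral => s _; rewrite emis_prod_cons EFinM muleAC.
rewrite ge0_integralZl ?I1 ?mule1 ?mule_ge0 ?lee_fin //.
  exact: measurable_EFin_emis_prod.
by move=> y _; rewrite lee_fin emis_prod_ge0.
Qed.

End densities.

End tuple_product_measure.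

Section max_log_ratio.
Context {R : realType} {k : nat} {T : Type}.
Implicit Types (fs f : 'I_k -> T -> R).
Local Open Scope ereal_scope.

Definition max_log_ratio fs f (z : T) : \bar R :=
  \big[Order.max/-oo]_(j < k) log_ratio (fs j z) (f j z).

Lemma le_max_log_ratio fs f z j : log_ratio (fs j z) (f j z) <= max_log_ratio fs f z.
Proof. exact: (le_bigmax -oo (fun j => log_ratio (fs j z) (f j z)) j). Qed.

Lemma max_log_ratio_eqNy fs f z : max_log_ratio fs f z = -oo -> forall j, fs j z = 0%R.
Proof.
move=> MNy j; have := le_max_log_ratio fs f z j.
rewrite MNy leeNy_eq /log_ratio; have [//|_] := eqVneq (fs j z) 0%R.
by case: (f j z =P 0%R).
Qed.

Lemma le_expR_max_log_ratio fs f z j (r : R) :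
  (0 <= fs j z)%R -> (0 <= f j z)%R -> max_log_ratio fs f z = r%:E ->
  (fs j z <= expR r * f j z)%R.
Proof.
move=> fs0 f0 Mr; have := le_max_log_ratio fs f z j; rewrite Mr /log_ratio.
case: (fs j z =P 0%R) => [-> _|/eqP fs_neq0]; first by rewrite mulr_ge0 ?expR_ge0.
case: (f j z =P 0%R) => [//|/eqP f_neq0]; rewrite lee_fin => ln_le.
have f_gt0 : (0 < f j z)%R by rewrite lt_def f_neq0 f0.
have fs_gt0 : (0 < fs j z)%R by rewrite lt_def fs_neq0 fs0.
rewrite -ler_pdivrMr // -[X in (X <= _)%R]lnK ?ler_expR // posrE divr_gt0 //.
Qed.

(* [max (-M) 0 <= ln (f / fs) < f / fs] since [M >= ln (fs / f)]. *)
Lemma mul_max_log_ratio_funeneg_le fs f z i :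
  (0 <= fs i z)%R -> (0 <= f i z)%R ->
  (fs i z)%:E * (max_log_ratio fs f)^\- z <= (f i z)%:E.
Proof.
move=> fs0 f0; rewrite funenegE.
have [->|fs_neq0] := eqVneq (fs i z) 0%R; first by rewrite mul0e lee_fin.
have fs_gt0 : (0 < fs i z)%R by rewrite lt_def fs_neq0 fs0.
have := le_max_log_ratio fs f z i; rewrite /log_ratio (negbTE fs_neq0).
case: (f i z =P 0%R) => [_|/eqP f_neq0].
  rewrite leye_eq => /eqP ->; rewrite (_ : maxe (- +oo) 0 = 0) ?mule0 ?lee_fin //.
  by apply/max_idPr; rewrite leNye.
have f_gt0 : (0 < f i z)%R by rewrite lt_def f_neq0 f0.
case: (max_log_ratio fs f z) => [r| |] //= ln_le; last first.
  by rewrite (_ : maxe -oo 0 = 0) ?mule0 ?lee_fin //; apply/max_idPr; rewrite leNye.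
rewrite lee_fin in ln_le; rewrite -EFin_max -EFinM lee_fin.
have [r_ge0|r_lt0] := leP 0%R r.
  by rewrite (_ : Num.max (- r) 0 = 0)%R ?mulr0 //; apply/max_idPr; lra.
rewrite (_ : Num.max (- r) 0 = - r)%R; last by apply/max_idPl; lra.
have Nr_le_ln : (- r <= ln (f i z / fs i z))%R.
  by rewrite -[(f i z / fs i z)%R]invf_div lnV ?posrE ?divr_gt0 //; lra.
have := ln_sublinear (divr_gt0 f_gt0 fs_gt0) => ln_lt.
have Nr_le : (- r <= f i z / fs i z)%R by lra.
apply: le_trans (ler_wpM2l (ltW fs_gt0) Nr_le) _.
by rewrite mulrC divfK ?gt_eqF.
Qed.

End max_log_ratio.

Section log_likelihood_ratio.
Context {R : realType} {k : nat} {T : Type} {n : nat}.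
Context {mus mu : 'I_k -> R} {Qs Q : 'M[R]_k} {fs f : 'I_k -> T -> R} {K : R}.
Hypotheses (mus0 : forall i, 0 <= mus i) (Qs0 : forall i j, 0 <= Qs i j).
Hypotheses (fs0 : forall i z, 0 <= fs i z) (f0 : forall i z, 0 <= f i z).
Hypothesis K_gt0 : 0 < K.
Hypothesis path_weight_leK :
  forall x : n.-tuple 'I_k, path_weight mus Qs x <= K * path_weight mu Q x.

Let p1 := hmm_density mus Qs fs n.
Let p2 := hmm_density mu Q f n.

Lemma ln_hmm_density_ratio_le (y : n.-tuple T) (r : 'I_n -> R) :
  (forall t, max_log_ratio fs f (tnth y t) = (r t)%:E) -> 0 < p1 y ->
  ln (p1 y / p2 y) <= ln K + \sum_t r t.
Proof.
move=> rE p1_gt0.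
have p1_le : p1 y <= K * expR (\sum_t r t) * p2 y.
  rewrite expR_sum; apply: hmm_density_le => // [x|t j].
    exact: path_weight_ge0.
  exact: le_expR_max_log_ratio.
have p2_gt0 : 0 < p2 y.
  by have := lt_le_trans p1_gt0 p1_le; rewrite pmulr_rgt0 // mulr_gt0 ?expR_gt0.
rewrite -ler_expR lnK ?posrE ?divr_gt0 // expRD lnK ?posrE //.
by rewrite ler_pdivrMr.
Qed.

Lemma log_ratio_hmm_density_le (y : n.-tuple T) :
  ((p1 y * ln (p1 y / p2 y))%:E <=
   (p1 y * ln K)%:E + \sum_(t < n) (p1 y)%:E * max_log_ratio fs f (tnth y t))%E.
Proof.
have [p1_0|p1_gt0] : p1 y = 0 \/ 0 < p1 y.
  by have := hmm_density_ge0 fs0 y mus0 Qs0; rewrite le0r => /orP[/eqP|]; [left|right].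
  by rewrite p1_0 !mul0r big1 ?adde0 // => t _; rewrite mul0e.
have MNy t : max_log_ratio fs f (tnth y t) != -oo%E.
  apply/eqP => My; have fsy0 := max_log_ratio_eqNy My.
  by have := hmm_density_gt0_emis fs0 p1_gt0 t; rewrite big1 ?ltxx.
have [[t My]|Mfin] := pselect (exists t, max_log_ratio fs f (tnth y t) = +oo%E).
  rewrite (_ : \sum_t _ = +oo%E) ?addey ?leey //; apply/esum_eqyP.
    by move=> t' _; move: (MNy t'); case: max_log_ratio => // _; rewrite gt0_muley.
  by exists t; rewrite My gt0_muley.
pose r t := fine (max_log_ratio fs f (tnth y t)).
have rE t : max_log_ratio fs f (tnth y t) = (r t)%:E.
  rewrite fineK // fin_numE MNy /=; apply/eqP => My; apply: Mfin; by exists t.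
rewrite (eq_bigr (fun t => (p1 y * r t)%:E)) => [|t _]; last by rewrite rE.
rewrite sumEFin -EFinD lee_fin -mulr_sumr -mulrDr ler_pM2l //.
exact: ln_hmm_density_ratio_le.
Qed.

End log_likelihood_ratio.

Section ereal_integral_complements.
Context {dT : measure_display} {T : measurableType dT} {R : realType}.
Local Open Scope ereal_scope.

(* No measurability is assumed: the integrand of [KL] is not known to be
   integrable beforehand. *)
Lemma le_integral_any (mu : set T -> \bar R) (D : set T) (f g : T -> \bar R) :
  (forall x, D x -> f x <= g x) -> \int[mu]_(x in D) f x <= \int[mu]_(x in D) g x.
Proof.
move=> fg; rewrite /integral; apply: leeB; apply: ereal_sup_le.
- move=> _ /= [h hle <-]; exists h => // x; apply: le_trans (hle x) _.
  rewrite !funeposE /patch; case: ifPn => // /[!inE] xD.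
  by apply: le_max2 => //; exact: fg.
- move=> _ /= [h hle <-]; exists h => // x; apply: le_trans (hle x) _.
  rewrite !funenegE /patch; case: ifPn => // /[!inE] xD.
  by apply: le_max2 => //; rewrite leeN2; exact: fg.
Qed.

Lemma funepos_EFinM (h : T -> R) (F : T -> \bar R) : (forall z, 0 <= h z)%R ->
  (fun z => (h z)%:E * F z)^\+ = (fun z => (h z)%:E * F^\+ z).
Proof. by move=> h0; apply/funext => z; rewrite !funeposE maxe_pMr ?mule0 ?lee_fin. Qed.

Lemma funeneg_EFinM (h : T -> R) (F : T -> \bar R) : (forall z, 0 <= h z)%R ->
  (fun z => (h z)%:E * F z)^\- = (fun z => (h z)%:E * F^\- z).
Proof.
by move=> h0; apply/funext => z; rewrite !funenegE -muleN maxe_pMr ?mule0 ?lee_fin.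
Qed.

Lemma abs_cont_of_support (mu : {measure set T -> \bar R}) (p1 p2 : T -> R) :
  measurable_fun setT p1 -> measurable_fun setT p2 ->
  (forall y, 0 <= p1 y)%R -> (forall y, 0 <= p2 y)%R ->
  (forall y, 0 < p1 y -> 0 < p2 y)%R -> abs_cont mu p1 p2.
Proof.
move=> mp1 mp2 p1_ge0 p2_ge0 p12 A mA p2A0.
have p2A_ae0 : ae_eq mu A (EFin \o p2) (cst 0).
  apply/(ae_eq_integral_abs mu mA _).1; first exact/measurable_EFinP/measurable_funTS.
  by rewrite -p2A0 /dens_meas; apply: eq_integral => y _; rewrite /= ger0_norm.
rewrite /dens_meas (ae_eq_integral (cst 0)) ?integral0 //.
  exact/measurable_EFinP/measurable_funTS.
apply: filterS p2A_ae0 => y p2y0 Ay; have /= [{}p2y0] := p2y0 Ay.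
apply/eqP; rewrite /= eqe eq_le p1_ge0 andbT leNgt.
by apply/negP => /p12; rewrite p2y0 ltxx.
Qed.

Lemma measurable_log_ratio (a b : T -> R) :
  measurable_fun setT a -> measurable_fun setT b ->
  (forall z, 0 <= a z)%R -> (forall z, 0 <= b z)%R ->
  measurable_fun setT (fun z => log_ratio (a z) (b z)).
Proof.
move=> ma mb a0 b0.
rewrite (_ : (fun z => _) = fun z => if a z == 0%R then -oo else
   if b z == 0%R then +oo else (ln (a z) - ln (b z))%:E); last first.
  apply/funext => z; rewrite /log_ratio.
  have [//|a_neq0] := eqVneq (a z) 0%R; have [//|b_neq0] := eqVneq (b z) 0%R.
  by rewrite ln_div // posrE lt0r ?a_neq0 ?b_neq0 ?a0 ?b0.
apply: measurable_fun_ifT; first exact: measurable_fun_eqr ma (measurable_cst _).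
  exact: measurable_cst.
apply: measurable_fun_ifT; first exact: measurable_fun_eqr mb (measurable_cst _).
  exact: measurable_cst.
by apply/measurable_EFinP; apply: measurable_funB; apply: measurableT_comp.
Qed.

Lemma measurable_bigmaxe (I : Type) (s : seq I) (F : I -> T -> \bar R) :
  (forall i, measurable_fun setT (F i)) ->
  measurable_fun setT (fun z => \big[Order.max/-oo]_(i <- s) F i z).
Proof.
move=> mF; elim: s => [|i s IH].
  by under eq_fun do rewrite big_nil; exact: measurable_cst.
under eq_fun do rewrite big_cons.
exact: measurable_maxe.
Qed.

End ereal_integral_complements.

Section max_log_ratio_integrals.
Context {dT : measure_display} {T : measurableType dT} {R : realType} {k : nat}.
Variables (lam : {measure set T -> \bar R}) (fs f : 'I_k -> T -> R).
Hypotheses (fsd : forall i, is_density lam (fs i)) (fd : forall i, is_density lam (f i)).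
Local Open Scope ereal_scope.

Let fs0 i z : (0 <= fs i z)%R. Proof. by case: (fsd i) => _ []. Qed.
Let f0 i z : (0 <= f i z)%R. Proof. by case: (fd i) => _ []. Qed.
Let mfs i : measurable_fun setT (fs i). Proof. by case: (fsd i). Qed.

Lemma measurable_max_log_ratio : measurable_fun setT (max_log_ratio fs f).
Proof.
apply: measurable_bigmaxe => j; apply: measurable_log_ratio => //.
by case: (fd j).
Qed.

Let mfsM i (F : T -> \bar R) : measurable_fun setT F ->
  measurable_fun setT (fun z => (fs i z)%:E * F z).
Proof. by move=> mF; apply: emeasurable_funM => //; exact/measurable_EFinP. Qed.

Lemma integral_max_log_ratio_funeneg_le1 i :
  \int[lam]_z ((fs i z)%:E * (max_log_ratio fs f)^\- z) <= 1.
Proof.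
rewrite -(proj2 (proj2 (fd i))); apply: ge0_le_integral => //.
- by move=> z _; rewrite mule_ge0 ?lee_fin.
- exact: mfsM (measurable_funeneg measurable_max_log_ratio).
- by apply/measurable_EFinP; case: (fd i).
- by move=> z _; exact: mul_max_log_ratio_funeneg_le.
Qed.

Lemma integrable_max_log_ratio (eps : R) : A1b lam fs eps f ->
  forall i, lam.-integrable setT (fun z => (fs i z)%:E * max_log_ratio fs f z).
Proof.
move=> A1b_eps i; have mM := measurable_max_log_ratio.
apply/integrableP; split; first exact: mfsM.
pose F z := (fs i z)%:E * max_log_ratio fs f z.
have FE z : `|F z| = (fs i z)%:E * (max_log_ratio fs f)^\+ z +
                     (fs i z)%:E * (max_log_ratio fs f)^\- z.
  have -> : `|F z| = F^\+ z + F^\- z.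
    by have /(congr1 (fun g => g z)) := fune_abse F.
  by rewrite /F funepos_EFinM ?funeneg_EFinM.
under eq_integral do rewrite FE.
rewrite ge0_integralD //; first last.
- exact: mfsM (measurable_funeneg mM).
- by move=> z _; rewrite mule_ge0 ?lee_fin.
- exact: mfsM (measurable_funepos mM).
- by move=> z _; rewrite mule_ge0 ?lee_fin.
have neg_lt : \int[lam]_z ((fs i z)%:E * (max_log_ratio fs f)^\- z) < +oo.
  by rewrite (le_lt_trans (integral_max_log_ratio_funeneg_le1 i)) ?ltey.
have neg_fin : \int[lam]_z ((fs i z)%:E * (max_log_ratio fs f)^\- z) \is a fin_num.
  by rewrite ge0_fin_numE // integral_ge0 // => z _; rewrite mule_ge0 ?lee_fin.
apply: lte_add_pinfty neg_lt.
have := A1b_eps i; rewrite -/(max_log_ratio fs f) integralE -/F.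
rewrite funepos_EFinM ?funeneg_EFinM // lteBlDr // => pos_lt.
by apply: lt_trans pos_lt _; rewrite ltey_eq fin_numD neg_fin.
Qed.

End max_log_ratio_integrals.

Section hmm_density_integrals.
Context {dT : measure_display} {T : measurableType dT} {R : realType} {k : nat}.
Variables (lam : {sigma_finite_measure set T -> \bar R}).
Variables (nu : 'I_k -> R) (Q : 'M[R]_k) (g : 'I_k -> T -> R).
Hypotheses (gd : forall i, is_density lam (g i)).
Hypotheses (nu0 : forall i, (0 <= nu i)%R) (Q0 : forall i j, (0 <= Q i j)%R).
Local Open Scope ereal_scope.

Let g0 i z : (0 <= g i z)%R. Proof. by case: (gd i) => _ []. Qed.
Let mg i : measurable_fun setT (g i). Proof. by case: (gd i). Qed.
Let w0 n (x : n.-tuple 'I_k) : (0 <= path_weight nu Q x)%R.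
Proof. exact: path_weight_ge0. Qed.
Let p0 n (y : n.-tuple T) : (0 <= hmm_density nu Q g n y)%R.
Proof. exact: hmm_density_ge0. Qed.

Lemma measurable_hmm_density n : measurable_fun setT (hmm_density nu Q g n).
Proof.
apply: measurable_sum => x; apply: measurable_funM; first exact: measurable_cst.
exact: measurable_emis_prod.
Qed.

Lemma integral_hmm_densityM n (H : n.-tuple T -> \bar R) :
  measurable_fun setT H -> (forall y, 0 <= H y) ->
  \int[prod_meas lam n]_y ((hmm_density nu Q g n y)%:E * H y) =
  \sum_(x : n.-tuple 'I_k) (path_weight nu Q x)%:E *
    \int[prod_meas lam n]_y ((emis_prod g x y)%:E * H y).
Proof.
move=> mH H0; have [P PE] := prod_meas_sigma_finite lam n; rewrite PE.
have mFH x : measurable_fun setT (fun y => (emis_prod g x y)%:E * H y).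
  by apply: emeasurable_funM => //; apply/measurable_EFinP; exact: measurable_emis_prod.
have FH0 x y : 0 <= (emis_prod g x y)%:E * H y.
  by rewrite mule_ge0 ?lee_fin ?emis_prod_ge0.
transitivity (\int[P]_y \sum_(x : n.-tuple 'I_k)
    (path_weight nu Q x)%:E * ((emis_prod g x y)%:E * H y)).
  apply: eq_integral => y _; rewrite hmm_densityE -sumEFin ge0_sume_distrl.
    by apply: eq_bigr => x _; rewrite EFinM muleA.
  by move=> x _; rewrite lee_fin mulr_ge0 ?emis_prod_ge0.
rewrite ge0_integral_sum //.
- by apply: eq_bigr => x _; rewrite ge0_integralZl ?lee_fin //; exact: mFH.
- by move=> x; apply: measurable_funeM; exact: mFH.
- by move=> x y _; rewrite mule_ge0 ?lee_fin.
Qed.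

Lemma integral_hmm_density_tnth (h : T -> \bar R) :
  measurable_fun setT h -> (forall z, 0 <= h z) -> forall n (t : 'I_n),
  \int[prod_meas lam n]_y ((hmm_density nu Q g n y)%:E * h (tnth y t)) =
  \sum_(x : n.-tuple 'I_k) (path_weight nu Q x)%:E *
    \int[lam]_z ((g (tnth x t) z)%:E * h z).
Proof.
move=> mh h0 n t; rewrite integral_hmm_densityM //.
- by apply: eq_bigr => x _; rewrite integral_emis_prod_tnth.
- exact: measurableT_comp mh (measurable_tnth t).
Qed.

Lemma integral_hmm_density n : in_simplex nu -> transition_matrix Q ->
  \int[prod_meas lam n]_y (hmm_density nu Q g n y)%:E = 1.
Proof.
move=> nu1 Q1; have [P PE] := prod_meas_sigma_finite lam n.
transitivity (\int[prod_meas lam n]_y ((hmm_density nu Q g n y)%:E * cst 1 y)).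
  by rewrite PE; apply: eq_integral => y _; rewrite mule1.
rewrite integral_hmm_densityM //.
rewrite (eq_bigr (fun x => (path_weight nu Q x)%:E)) ?sumEFin ?sum_path_weight //.
move=> x _; rewrite PE; under eq_integral do rewrite mule1.
by have := integral_emis_prod gd x; rewrite PE => ->; rewrite mule1.
Qed.

Section signed_tnth_integrals.
Variable M : T -> \bar R.
Hypothesis mM : measurable_fun setT M.
Hypothesis gM_int : forall i, lam.-integrable setT (fun z => (g i z)%:E * M z).

Let a i := fine (\int[lam]_z ((g i z)%:E * M^\+ z)).
Let b i := fine (\int[lam]_z ((g i z)%:E * M^\- z)).

Let aE i : \int[lam]_z ((g i z)%:E * M^\+ z) = (a i)%:E.
Proof.
have := integrable_fin_num measurableT (integrable_funepos measurableT (gM_int i)).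
by rewrite funepos_EFinM // => /fineK.
Qed.

Let bE i : \int[lam]_z ((g i z)%:E * M^\- z) = (b i)%:E.
Proof.
have := integrable_fin_num measurableT (integrable_funeneg measurableT (gM_int i)).
by rewrite funeneg_EFinM // => /fineK.
Qed.

Let integral_gM i : \int[lam]_z ((g i z)%:E * M z) = (a i - b i)%:E.
Proof. by rewrite integralE funepos_EFinM ?funeneg_EFinM // aE bE. Qed.

Let F n (t : 'I_n) y := (hmm_density nu Q g n y)%:E * M (tnth y t).

Let integral_F_funepos n t :
  \int[prod_meas lam n]_y (F t)^\+ y =
  (\sum_(x : n.-tuple 'I_k) path_weight nu Q x * a (tnth x t))%:E.
Proof.
have [P PE] := prod_meas_sigma_finite lam n.
rewrite PE (eq_integral (fun y => (hmm_density nu Q g n y)%:E * M^\+ (tnth y t))).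
  have := integral_hmm_density_tnth (measurable_funepos mM) (funepos_ge0 M) t.
  by rewrite PE => ->; rewrite -sumEFin; apply: eq_bigr => x _; rewrite aE EFinM.
by move=> y _; rewrite /F funepos_EFinM // !funeposE.
Qed.

Let integral_F_funeneg n t :
  \int[prod_meas lam n]_y (F t)^\- y =
  (\sum_(x : n.-tuple 'I_k) path_weight nu Q x * b (tnth x t))%:E.
Proof.
have [P PE] := prod_meas_sigma_finite lam n.
rewrite PE (eq_integral (fun y => (hmm_density nu Q g n y)%:E * M^\- (tnth y t))).
  have := integral_hmm_density_tnth (measurable_funeneg mM) (funeneg_ge0 M) t.
  by rewrite PE => ->; rewrite -sumEFin; apply: eq_bigr => x _; rewrite bE EFinM.
by move=> y _; rewrite /F funeneg_EFinM // !funenegE.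
Qed.

Let measurable_F n (t : 'I_n) : measurable_fun setT (F t).
Proof.
apply: emeasurable_funM; last exact: measurableT_comp mM (measurable_tnth t).
by apply/measurable_EFinP; exact: measurable_hmm_density.
Qed.

Lemma integrable_hmm_density_tnth n (t : 'I_n) :
  (prod_meas lam n).-integrable setT
    (fun y => (hmm_density nu Q g n y)%:E * M (tnth y t)).
Proof.
have [P PE] := prod_meas_sigma_finite lam n.
have := integral_F_funepos t; have := integral_F_funeneg t; rewrite PE => Fneg Fpos.
apply/integrableP; split; first exact: measurable_F.
rewrite (eq_integral (fun y => (F t)^\+ y + (F t)^\- y)); last first.
  by move=> y _; have /(congr1 (fun h => h y)) := fune_abse (F t).
rewrite ge0_integralD //; first by rewrite Fpos Fneg -EFinD ltry.
- exact: measurable_funepos (measurable_F t).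
- exact: measurable_funeneg (measurable_F t).
Qed.

Lemma integral_hmm_density_tnth_le (eps : R) n (t : 'I_n) :
  in_simplex nu -> transition_matrix Q ->
  (forall i, \int[lam]_z ((g i z)%:E * M z) <= eps%:E) ->
  \int[prod_meas lam n]_y ((hmm_density nu Q g n y)%:E * M (tnth y t)) <= eps%:E.
Proof.
move=> nu1 Q1 gM_le; have [P PE] := prod_meas_sigma_finite lam n.
have := integral_F_funepos t; have := integral_F_funeneg t; rewrite PE => Fneg Fpos.
rewrite integralE Fpos Fneg.
rewrite -EFinB lee_fin -sumrB -[leRHS]mul1r -(sum_path_weight nu1 Q1 n) mulr_suml.
apply: ler_sum => x _; rewrite -mulrBr ler_wpM2l //.
by have := gM_le (tnth x t); rewrite integral_gM lee_fin.
Qed.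

End signed_tnth_integrals.

End hmm_density_integrals.

Section KL_bound.
Context {dT : measure_display} {T : measurableType dT} {R : realType} {k : nat}.
Variables (lam : {sigma_finite_measure set T -> \bar R}) (n : nat).
Variables (mus mu : 'I_k -> R) (Qs Q : 'M[R]_k) (fs f : 'I_k -> T -> R) (K eps : R).
Hypotheses (fsd : forall i, is_density lam (fs i)) (fd : forall i, is_density lam (f i)).
Hypotheses (mus1 : in_simplex mus) (Qs1 : transition_matrix Qs).
Hypotheses (mu_gt0 : forall i, 0 < mu i) (Q_gt0 : forall i j, 0 < Q i j).
Hypothesis K_gt0 : 0 < K.
Hypothesis path_weight_leK :
  forall x : n.-tuple 'I_k, path_weight mus Qs x <= K * path_weight mu Q x.
Hypotheses (A1b_eps : A1b lam fs eps f) (A1c_f : A1c fs f).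

Lemma KL_hmm_density_le :
  (KL (prod_meas lam n) (hmm_density mus Qs fs n) (hmm_density mu Q f n) <=
   (ln K + n%:R * eps)%:E)%E.
Proof.
have mus0 i : 0 <= mus i by case: mus1.
have Qs0 i j : 0 <= Qs i j by case: (Qs1 i).
have mu0 i : 0 <= mu i by exact: ltW.
have Q0 i j : 0 <= Q i j by exact: ltW.
have fs0 i z : 0 <= fs i z by case: (fsd i) => _ [].
have f0 i z : 0 <= f i z by case: (fd i) => _ [].
pose p1 := hmm_density mus Qs fs n; pose p2 := hmm_density mu Q f n.
pose M := max_log_ratio fs f.
have [P PE] := prod_meas_sigma_finite lam n.
have int_p1 : (\int[P]_y (p1 y)%:E = 1)%E.
  by have := integral_hmm_density fsd mus0 Qs0 n mus1 Qs1; rewrite PE.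
have p1_int : P.-integrable setT (EFin \o p1).
  apply/integrableP; split.
    by apply/measurable_EFinP; exact: measurable_hmm_density.
  under eq_integral do rewrite /= ger0_norm ?hmm_density_ge0 //.
  by rewrite int_p1 ltry.
have M_int t : P.-integrable setT (fun y => (p1 y)%:E * M (tnth y t))%E.
  have := integrable_hmm_density_tnth fsd mus0 Qs0 (measurable_max_log_ratio fsd fd)
    (integrable_max_log_ratio fsd fd A1b_eps) t.
  by rewrite PE.
have M_le t : (\int[P]_y ((p1 y)%:E * M (tnth y t)) <= eps%:E)%E.
  have := integral_hmm_density_tnth_le fsd mus0 Qs0 (measurable_max_log_ratio fsd fd)
    (integrable_max_log_ratio fsd fd A1b_eps) t mus1 Qs1.
  by rewrite PE; apply => i; exact/ltW/A1b_eps.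
have AC : abs_cont P p1 p2.
  apply: abs_cont_of_support => //; try exact: measurable_hmm_density.
  - by move=> y; exact: hmm_density_ge0.
  - by move=> y; exact: hmm_density_ge0.
  move=> y /(hmm_density_gt0_emis fs0) fs_y; apply: hmm_density_gt0 => // t.
  exact/A1c_f/fs_y.
rewrite PE /KL asboolT //.
apply: le_trans (le_integral_any _ (fun y _ =>
  log_ratio_hmm_density_le mus0 Qs0 fs0 f0 K_gt0 path_weight_leK y)) _.
rewrite integralD //; last 2 first.
- under eq_fun do rewrite EFinM muleC; exact: integrableZl.
- by apply: integrable_sum => // t _; exact: M_int.
rewrite integral_sum // EFinD; apply: leeD.
  under eq_integral do rewrite EFinM muleC.
  by rewrite integralZl // int_p1 mule1.
have -> : ((n%:R * eps)%:E = \sum_(t < n) eps%:E)%E.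
  by rewrite sumEFin sumr_const card_ord mulr_natl.
by apply: lee_sum => t _; exact: M_le.
Qed.

End KL_bound.

Lemma path_weight_le_A1a {R : realType} {k : nat} (qlow eps : R)
    (mus mu : 'I_k -> R) (Qs Q : 'M[R]_k) n (x : n.+1.-tuple 'I_k) :
  0 < qlow -> 0 < eps -> in_simplex mus -> (forall i, qlow <= mu i) ->
  (forall i j, 0 <= Qs i j) -> (forall i j, qlow <= Q i j) -> A1a Qs eps Q ->
  path_weight mus Qs x <= (1 + eps / qlow) ^+ n / qlow * path_weight mu Q x.
Proof.
move=> q_gt0 eps_gt0 mus1 mu_ge Qs0 Q_ge QsQ.
rewrite [_ / qlow]mulrC; apply: path_weight_le => // [i|i|i j|i j].
- by case: mus1.
- by rewrite (le_trans (simplex_le1 i mus1)) // ler_pdivlMl // mulr1.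
- exact: le_trans (ltW q_gt0) (Q_ge i j).
have Qs_lt : Qs i j - Q i j < eps.
  by apply: le_lt_trans (QsQ i j); rewrite distrC; exact: ler_norm.
have eps_le : eps <= eps / qlow * Q i j.
  by rewrite -mulrA ler_peMr ?(ltW eps_gt0) // ler_pdivlMl // mulr1.
rewrite mulrDl mul1r; lra.
Qed.

Lemma ln_path_weight_ratio_le {R : realType} (qlow eps : R) n :
  0 < qlow -> 0 <= eps ->
  ln ((1 + eps / qlow) ^+ n / qlow) <= qlow^-1 + n%:R * (eps / qlow).
Proof.
move=> q_gt0 eps_ge0.
have c_gt0 : 0 < 1 + eps / qlow by rewrite ltr_pwDl ?divr_ge0 // ltW.
rewrite lnM ?posrE ?exprn_gt0 ?invr_gt0 // lnXn // addrC -[ln _ *+ n]mulr_natl.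
apply: lerD; first by apply/ltW/ln_sublinear; rewrite invr_gt0.
apply: ler_wpM2l => //; apply: le_ln1Dx.
by apply: lt_le_trans (divr_ge0 eps_ge0 (ltW q_gt0)); rewrite ltrN10.
Qed.

Lemma KL_rate_le {R : realType} (qlow eps : R) n :
  0 < qlow -> qlow <= 1 -> 0 < eps -> n.+1%:R^-1 < eps ->
  n.+1%:R^-1 * (qlow^-1 + n%:R * (eps / qlow) + n.+1%:R * eps) <=
  3 / qlow * eps.
Proof.
move=> q_gt0 q_le1 eps_gt0 inv_lt; set u := n.+1%:R^-1; set v := qlow^-1.
have v_ge1 : 1 <= v by rewrite /v invf_ge1.
have u_gt0 : 0 < u by rewrite /u invr_gt0 ltr0n.
have un : u * n.+1%:R = 1 by rewrite /u mulVf.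
have n_le : n%:R <= n.+1%:R :> R by rewrite ler_nat.
have ev_ge0 : 0 <= eps * v by rewrite mulr_ge0 ?ltW // (lt_le_trans ltr01 v_ge1).
have H1 : u * v <= eps * v by rewrite ler_pM2r ?ltW // (lt_le_trans ltr01 v_ge1).
have H2 : u * (n%:R * (eps * v)) <= eps * v.
  apply: (@le_trans _ _ (u * (n.+1%:R * (eps * v)))); last by rewrite !mulrA un mul1r.
  by rewrite ler_pM2l // ler_wpM2r.
have H3 : u * (n.+1%:R * eps) <= eps * v by rewrite mulrA un mul1r ler_peMr // ltW.
rewrite !mulrDr; apply: le_trans (lerD (lerD H1 H2) H3) _.
rewrite /v; lra.
Qed.

Theorem lemma1 (R : realType) (k d : nat) (hk : (0 < k)%N) (hd : (0 < d)%N)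
  (lam : {sigma_finite_measure set (d.-tuple R) -> \bar R})
  (GQ : set (set (trans_mat k R)))
  (Gf : set (set (emis k (d.-tuple R) R)))
  (piQ : probability (g_sigma_algebraType GQ) R)
  (pif : probability (g_sigma_algebraType Gf) R)
  (mu : 'I_k -> R)
  (qlow : R) (Qs : 'M[R]_k) (fs : 'I_k -> d.-tuple R -> R) (mus : 'I_k -> R)
  (eps0 : R)
  (Theta : R -> set (g_sigma_algebraType GQ * g_sigma_algebraType Gf)) :
  0 < qlow ->
  in_Theta_lb lam qlow Qs fs ->
  is_stationary Qs mus ->
  in_simplex mu -> (forall i, qlow <= mu i) ->
  0 < eps0 ->
  (forall eps, 0 < eps < eps0 ->
     measurable (Theta eps) /\ (0 < (piQ \x pif) (Theta eps))%E /\
     forall theta, Theta eps theta ->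
       let Q : 'M[R]_k := theta.1 in
       let f : 'I_k -> d.-tuple R -> R := theta.2 in
       in_Theta_lb lam qlow Q f /\ A1a Qs eps Q /\ A1b lam fs eps f /\
       A1c fs f /\ A1d fs f /\ A1e lam fs f) ->
  forall eps, 0 < eps < 1 -> eps < eps0 ->
  exists N : nat, forall n : nat, (N <= n)%N ->
    forall theta, Theta eps theta ->
      let Q : 'M[R]_k := theta.1 in
      let f : 'I_k -> d.-tuple R -> R := theta.2 in
      (((n%:R)^-1)%:E *
        KL (prod_meas lam n) (hmm_density mus Qs fs n)
           (hmm_density mu Q f n)
      <= (3 / qlow * eps)%:E)%E.
Proof.
move=> q_gt0 [[Qs1 Qs_ge] fsd] [mus1 _] _ mu_ge _ A1 eps /andP[eps_gt0 _] eps_lt0.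
have [_ [_ Theta_eps]] := A1 eps (introT andP (conj eps_gt0 eps_lt0)).
have Qs0 i j : 0 <= Qs i j := le_trans (ltW q_gt0) (Qs_ge i j).
have q_le1 : qlow <= 1.
  exact: le_trans (Qs_ge (Ordinal hk) (Ordinal hk)) (simplex_le1 _ (Qs1 _)).
exists (Num.truncn eps^-1).+1 => -[//|m] Nm theta /Theta_eps /=.
move=> [[[Q1 Q_ge] fd] [A1a_eps [A1b_eps [A1c_f _]]]].
have Q_gt0 i j : 0 < theta.1 i j := lt_le_trans q_gt0 (Q_ge i j).
have mu_gt0 i : 0 < mu i := lt_le_trans q_gt0 (mu_ge i).
have K_gt0 : 0 < (1 + eps / qlow) ^+ m / qlow.
  by rewrite divr_gt0 // exprn_gt0 // ltr_pwDl ?divr_ge0 // ltW.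
have KL_le := KL_hmm_density_le fsd fd mus1 Qs1 mu_gt0 Q_gt0 K_gt0
  (fun x => path_weight_le_A1a x q_gt0 eps_gt0 mus1 mu_ge Qs0 Q_ge A1a_eps)
  A1b_eps A1c_f.
apply: le_trans (lee_wpmul2l _ KL_le) _; first by rewrite lee_fin invr_ge0.
have inv_lt : m.+1%:R^-1 < eps.
  rewrite -[eps]invrK ltf_pV2 ?posrE ?invr_gt0 ?ltr0n //.
  by apply: lt_le_trans (truncnS_gt _) _; rewrite ler_nat.
rewrite -EFinM lee_fin; apply: le_trans (KL_rate_le q_gt0 q_le1 eps_gt0 inv_lt).
apply: ler_wpM2l; first by rewrite invr_ge0.
by rewrite lerD2r; exact: ln_path_weight_ratio_le (ltW eps_gt0).
Qed.
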